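(* Let $A$ be a closed $\forall^+$ type of system $\mathcal F$. Then $A$ is an input type: for every normal $\lambda$-term $t$, if $\vdash_{\mathcal F} t : A$ then $\vdash_{\mathcal F_0} t : A$.
   Context: $\lambda$-terms are those of the untyped $\lambda$-calculus; normal means without $\beta$-redex. Types of system $\mathcal F$: built from type variables with $\rightarrow$, $\forall$; only proper types (in every $\forall XA$, $X$ occurs free in $A$). Typing: (ax) $\Gamma \vdash x_i : A_i$ for $x_i:A_i\in\Gamma$; ($\rightarrow_i$) from $\Gamma, x:B \vdash t : C$ infer $\Gamma \vdash \lambda x t : B \rightarrow C$; ($\rightarrow_e$) from $\Gamma \vdash u : B\rightarrow C$, $\Gamma \vdash v : B$ infer $\Gamma \vdash (u)v : C$; ($\forall_i$) from $\Gamma \vdash t : A$, $X$ not free in $\Gamma$, infer $\Gamma \vdash t : \forall X A$; ($\forall_e$) from $\Gamma \vdash t : \forall X A$ infer $\Gamma \vdash t : A[C/X]$ for any type $C$. $\mathcal F_0$ is $\mathcal F$ without ($\forall_e$). The classes $\forall^+$, $\forall^-$: every type variable is both; if $A$ is $\forall^+$ (resp. $\forall^-$) and $B$ is $\forall^-$ (resp. $\forall^+$) then $B\rightarrow A$ is $\forall^+$ (resp. $\forall^-$); if $A$ is $\forall^+$ and $X$ is free in $A$ then $\forall XA$ is $\forall^+$. *)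

From Stdlib Require Import Arith List Bool.
Import ListNotations.

Inductive term : Type :=
| Var : nat -> term
| App : term -> term -> term
| Lam : term -> term.

Fixpoint normal (t : term) : Prop :=
  match t with
  | Var _ => True
  | Lam u => normal u
  | App u v =>
      match u with
      | Lam _ => False
      | _ => normal u /\ normal v
      end
  end.

Inductive ty : Type :=
| TVar : nat -> ty
| Arr : ty -> ty -> ty
| All : ty -> ty.

Fixpoint occurs (n : nat) (A : ty) : bool :=
  match A with
  | TVar m => Nat.eqb n m
  | Arr B C => occurs n B || occurs n C
  | All B => occurs (S n) B
  end.

Fixpoint proper (A : ty) : bool :=
  match A with
  | TVar _ => true
  | Arr B C => proper B && proper C
  | All B => occurs 0 B && proper B
  end.

Fixpoint closed_at (k : nat) (A : ty) : bool :=
  match A with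
  | TVar n => Nat.ltb n k
  | Arr B C => closed_at k B && closed_at k C
  | All B => closed_at (S k) B
  end.

Definition closed_ty (A : ty) : bool := closed_at 0 A.

Fixpoint lift (k c : nat) (A : ty) : ty :=
  match A with
  | TVar n => if Nat.ltb n c then TVar n else TVar (n + k)
  | Arr B D => Arr (lift k c B) (lift k c D)
  | All B => All (lift k (S c) B)
  end.

(** [subst c C A] = A[C/X] where X is the variable of index c; variables
    above c are decremented (the binder of X is removed). *)
Fixpoint subst (c : nat) (C : ty) (A : ty) : ty :=
  match A with
  | TVar n =>
      if Nat.eqb n c then lift c 0 C
      else if Nat.ltb c n then TVar (pred n) else TVar n
  | Arr B D => Arr (subst c C B) (subst c C D)
  | All B => All (subst (S c) C B)
  end.

Definition inst (A C : ty) : ty := subst 0 C A.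

(** Shift a context when going under a type binder (X not free in Gamma). *)
Definition shift_ctx (G : list ty) : list ty := map (lift 1 0) G.

Inductive typF : list ty -> term -> ty -> Prop :=
| F_ax : forall G n A, nth_error G n = Some A -> typF G (Var n) A
| F_arr_i : forall G B C t, proper B = true ->
    typF (B :: G) t C -> typF G (Lam t) (Arr B C)
| F_arr_e : forall G B C u v,
    typF G u (Arr B C) -> typF G v B -> typF G (App u v) C
| F_all_i : forall G t A, occurs 0 A = true ->
    typF (shift_ctx G) t A -> typF G t (All A)
| F_all_e : forall G t A C, proper C = true ->
    typF G t (All A) -> typF G t (inst A C).

Inductive typF0 : list ty -> term -> ty -> Prop :=
| F0_ax : forall G n A, nth_error G n = Some A -> typF0 G (Var n) A
| F0_arr_i : forall G B C t, proper B = true ->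
    typF0 (B :: G) t C -> typF0 G (Lam t) (Arr B C)
| F0_arr_e : forall G B C u v,
    typF0 G u (Arr B C) -> typF0 G v B -> typF0 G (App u v) C
| F0_all_i : forall G t A, occurs 0 A = true ->
    typF0 (shift_ctx G) t A -> typF0 G t (All A).

Inductive allpos : ty -> Prop :=
| pos_var : forall n, allpos (TVar n)
| pos_arr : forall B A, allneg B -> allpos A -> allpos (Arr B A)
| pos_all : forall A, allpos A -> occurs 0 A = true -> allpos (All A)
with allneg : ty -> Prop :=
| neg_var : forall n, allneg (TVar n)
| neg_arr : forall B A, allpos B -> allneg A -> allneg (Arr B A).

(* Induction on the F-derivation of a normal term in a context of forall- types,
   proving simultaneously that a forall+ conclusion is F0-derivable and that a
   neutral term (a variable applied to arguments) has a forall- type, derivable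
   in F0, all of whose free variables are free in the context.  Consequently
   forall-introduction never types a neutral term (its bound variable would be
   free in the shifted context), and forall-elimination only applies to an
   abstraction.  The type forall X A of that abstraction is forall+ because
   A[C/X] is, so it is F0-derived, necessarily by forall-introduction, and
   substituting C for X in that F0-derivation yields A[C/X]. *)

From Stdlib Require Import List Arith Lia Bool.
Import ListNotations.

Ltac case_nat_tests := repeat match goal with
  | |- context [Nat.eqb ?a ?b] => destruct (Nat.eqb_spec a b)
  | |- context [Nat.ltb ?a ?b] => destruct (Nat.ltb_spec a b)
  end.

Lemma lift_lift (C : ty) (j k d e : nat) :
  e <= d <= e + k -> lift j d (lift k e C) = lift (j + k) e C.
Proof.
  revert j k d e; induction C; intros j k d e H; simpl.
  - case_nat_tests; simpl; case_nat_tests; f_equal; lia.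
  - rewrite IHC1, IHC2; auto.
  - rewrite IHC; auto; lia.
Qed.

Lemma subst_lift_comm (C B : ty) (c d : nat) :
  d <= c -> subst (S c) C (lift 1 d B) = lift 1 d (subst c C B).
Proof.
  revert c d; induction B; intros c d H; simpl.
  - destruct (Nat.ltb_spec n d); simpl.
    + case_nat_tests; simpl; case_nat_tests; try lia; reflexivity.
    + destruct (Nat.eqb_spec (n + 1) (S c)).
      * assert (n = c) by lia; subst.
        rewrite Nat.eqb_refl, lift_lift by lia; reflexivity.
      * destruct (Nat.eqb_spec n c); [lia|].
        case_nat_tests; simpl; case_nat_tests; try lia; f_equal; lia.
  - rewrite IHB1, IHB2; auto.
  - rewrite IHB; auto; lia.
Qed.

Lemma subst_lift_cancel (C B : ty) (c : nat) : subst c C (lift 1 c B) = B.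
Proof.
  revert c; induction B; intros c; simpl.
  - case_nat_tests; simpl; case_nat_tests; try lia; f_equal; lia.
  - rewrite IHB1, IHB2; auto.
  - rewrite IHB; auto.
Qed.

Lemma occurs_lift_gap (B : ty) (n k c : nat) :
  c <= n < c + k -> occurs n (lift k c B) = false.
Proof.
  revert n k c; induction B; intros m k c H; simpl.
  - case_nat_tests; simpl; apply Nat.eqb_neq; lia.
  - rewrite IHB1, IHB2; auto.
  - apply IHB; lia.
Qed.

Lemma occurs_lift_below (B : ty) (n k c : nat) :
  n < c -> occurs n (lift k c B) = occurs n B.
Proof.
  revert n k c; induction B; intros m k c H; simpl.
  - case_nat_tests; simpl; auto; symmetry; case_nat_tests; try lia;
      apply Nat.eqb_neq; lia.
  - rewrite IHB1, IHB2; auto.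
  - apply IHB; lia.
Qed.

Lemma occurs_subst_below (C B : ty) (n c : nat) :
  n < c -> occurs n (subst c C B) = occurs n B.
Proof.
  revert n c; induction B; intros m c H; simpl.
  - destruct (Nat.eqb_spec n c).
    + subst; rewrite occurs_lift_gap by lia; symmetry; apply Nat.eqb_neq; lia.
    + destruct (Nat.ltb_spec c n); simpl; auto.
      destruct (Nat.eqb_spec m (pred n)), (Nat.eqb_spec m n); lia.
  - rewrite IHB1, IHB2; auto.
  - apply IHB; lia.
Qed.

Lemma proper_lift (A : ty) (k c : nat) : proper (lift k c A) = proper A.
Proof.
  revert k c; induction A; intros k c; simpl.
  - case_nat_tests; auto.
  - rewrite IHA1, IHA2; auto.
  - rewrite IHA, occurs_lift_below by lia; auto.
Qed.

Lemma proper_subst (C A : ty) (c : nat) :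
  proper A = true -> proper C = true -> proper (subst c C A) = true.
Proof.
  revert c; induction A; intros c HA HC; simpl in *.
  - case_nat_tests; simpl; auto; rewrite proper_lift; auto.
  - apply andb_true_iff in HA as [H1 H2]; rewrite IHA1, IHA2; auto.
  - apply andb_true_iff in HA as [H1 H2].
    rewrite occurs_subst_below, IHA, H1 by (auto || lia); auto.
Qed.

Lemma map_subst_shift_ctx (C : ty) (c : nat) (G : list ty) :
  map (subst (S c) C) (shift_ctx G) = shift_ctx (map (subst c C) G).
Proof.
  unfold shift_ctx; rewrite !map_map; apply map_ext; intros; apply subst_lift_comm; lia.
Qed.

Lemma map_inst_shift_ctx (C : ty) (G : list ty) :
  map (subst 0 C) (shift_ctx G) = G.
Proof.
  unfold shift_ctx; rewrite map_map, <- map_id.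
  apply map_ext; intros; apply subst_lift_cancel.
Qed.

Lemma not_occurs0_shift_ctx (G : list ty) (B : ty) :
  In B (shift_ctx G) -> occurs 0 B = false.
Proof.
  unfold shift_ctx; intros HB; apply in_map_iff in HB as [B0 [<- _]].
  apply occurs_lift_gap; lia.
Qed.

Lemma polarity_lift (A : ty) (k c : nat) :
  (allpos A -> allpos (lift k c A)) /\ (allneg A -> allneg (lift k c A)).
Proof.
  revert k c; induction A; intros k c; simpl.
  - split; intros; case_nat_tests; constructor.
  - destruct (IHA1 k c), (IHA2 k c);
      split; intro Hty; inversion Hty; subst; constructor; auto.
  - destruct (IHA k (S c)); split; intro Hty; inversion Hty; subst.
    constructor; auto; rewrite occurs_lift_below by lia; auto.
Qed.

Lemma polarity_subst_reflect (C A : ty) (c : nat) :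
  (allpos (subst c C A) -> allpos A) /\ (allneg (subst c C A) -> allneg A).
Proof.
  revert c; induction A; intros c; simpl.
  - split; intros; constructor.
  - destruct (IHA1 c), (IHA2 c);
      split; intro Hty; inversion Hty; subst; constructor; auto.
  - destruct (IHA (S c)); split; intro Hty; inversion Hty; subst.
    constructor; auto; rewrite occurs_subst_below in * by lia; auto.
Qed.

Lemma allneg_shift_ctx (G : list ty) : Forall allneg G -> Forall allneg (shift_ctx G).
Proof.
  intros HG; apply Forall_map; eapply Forall_impl; [|exact HG].
  intros; apply polarity_lift; auto.
Qed.

Lemma proper_shift_ctx (G : list ty) :
  Forall (fun B => proper B = true) G ->
  Forall (fun B => proper B = true) (shift_ctx G).
Proof.
  intros HG; apply Forall_map; eapply Forall_impl; [|exact HG].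
  intros; rewrite proper_lift; auto.
Qed.

Lemma typF_proper (G : list ty) (t : term) (A : ty) :
  typF G t A -> Forall (fun B => proper B = true) G -> proper A = true.
Proof.
  induction 1; intros HG; simpl.
  - eapply Forall_forall in HG; eauto; eapply nth_error_In; eauto.
  - rewrite H, IHtypF; auto.
  - specialize (IHtypF1 HG); simpl in IHtypF1; apply andb_true_iff in IHtypF1; tauto.
  - rewrite H, IHtypF; auto using proper_shift_ctx.
  - specialize (IHtypF HG); simpl in IHtypF; apply andb_true_iff in IHtypF as [_ HA].
    apply proper_subst; auto.
Qed.

Lemma typF0_subst (G : list ty) (t : term) (A : ty) :
  typF0 G t A -> forall (C : ty) (c : nat), proper C = true ->
  typF0 (map (subst c C) G) t (subst c C A).
Proof.
  induction 1; intros D c HD; simpl.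
  - constructor; apply map_nth_error; auto.
  - constructor; [apply proper_subst; auto | apply (IHtypF0 D c HD)].
  - econstructor; [apply (IHtypF0_1 D c HD) | apply (IHtypF0_2 D c HD)].
  - constructor; [rewrite occurs_subst_below by lia; auto |].
    rewrite <- map_subst_shift_ctx; apply IHtypF0; auto.
Qed.

(* A forall-type of an abstraction is F0-derived only by forall-introduction. *)
Lemma typF0_lam_all_e (G : list ty) (u : term) (A C : ty) :
  proper C = true -> typF0 G (Lam u) (All A) -> typF0 G (Lam u) (inst A C).
Proof.
  intros HC Hu; inversion Hu as [| | | ? ? ? _ Hbody]; subst.
  rewrite <- (map_inst_shift_ctx C G); exact (typF0_subst _ _ _ Hbody C 0 HC).
Qed.

Definition neutral (t : term) : Prop := match t with Lam _ => False | _ => True end.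

Definition free_in_ctx (G : list ty) (A : ty) : Prop :=
  forall n, occurs n A = true -> exists B, In B G /\ occurs n B = true.

Definition input_invariant (G : list ty) (t : term) (A : ty) : Prop :=
  (allpos A -> typF0 G t A) /\
  (neutral t -> allneg A /\ typF0 G t A /\ free_in_ctx G A).

Lemma input_invariant_all_i (G : list ty) (t : term) (A : ty) :
  occurs 0 A = true -> input_invariant (shift_ctx G) t A ->
  input_invariant G t (All A).
Proof.
  intros H0 [Hpos Hneu]; split.
  - intros Hp; inversion Hp; subst; constructor; auto.
  - intros Ht; destruct (Hneu Ht) as [_ [_ Hfree]].
    destruct (Hfree 0 H0) as [B [HB HB0]].
    rewrite (not_occurs0_shift_ctx G B HB) in HB0; discriminate.
Qed.

Lemma input_invariant_all_e (G : list ty) (t : term) (A C : ty) :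
  proper C = true -> occurs 0 A = true -> input_invariant G t (All A) ->
  input_invariant G t (inst A C).
Proof.
  intros HC H0 [Hpos Hneu].
  destruct t as [n | u v | u];
    try (destruct (Hneu I) as [Hneg _]; inversion Hneg).
  split; [|simpl; tauto].
  intros Hp; apply typF0_lam_all_e; auto; apply Hpos.
  constructor; auto; apply (polarity_subst_reflect C A 0); auto.
Qed.

Lemma typF_input_invariant (G : list ty) (t : term) (A : ty) :
  typF G t A -> Forall allneg G -> Forall (fun B => proper B = true) G ->
  normal t -> input_invariant G t A.
Proof.
  induction 1; intros HN HP Hn.
  - assert (In A G) by (eapply nth_error_In; eauto).
    split; [intros; constructor; auto|].
    intros _; repeat split; [eapply Forall_forall; eauto | constructor; auto |].
    intros m Hm; exists A; auto.
  - split; [|simpl; tauto].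
    intros Hp; inversion Hp as [| ? ? HnegB HposC |]; subst.
    constructor; auto.
    exact (proj1 (IHtypF (Forall_cons _ HnegB HN) (Forall_cons _ H HP) Hn) HposC).
  - assert (Hu : normal u /\ neutral u /\ normal v)
      by (destruct u; simpl in *; tauto).
    destruct Hu as [Hu [Hneu Hv]].
    destruct (proj2 (IHtypF1 HN HP Hu) Hneu) as [HnegA [Hu0 Hfree]].
    inversion HnegA as [| ? ? HposB HnegC]; subst.
    assert (Happ : typF0 G (App u v) C)
      by exact (F0_arr_e _ _ _ _ _ Hu0 (proj1 (IHtypF2 HN HP Hv) HposB)).
    split; [auto|]; intros _; repeat split; auto.
    intros m Hm; apply Hfree; simpl; rewrite Hm, orb_true_r; auto.
  - apply input_invariant_all_i; auto.
    apply IHtypF; auto using allneg_shift_ctx, proper_shift_ctx.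
  - apply input_invariant_all_e; auto.
    pose proof (typF_proper _ _ _ H0 HP) as HA; simpl in HA.
    apply andb_true_iff in HA; tauto.
Qed.

Theorem theorem2p2p3 (A : ty) :
  proper A = true -> closed_ty A = true -> allpos A ->
  forall t : term, normal t -> typF [] t A -> typF0 [] t A.
Proof.
  intros _ _ HA t Hn Ht.
  exact (proj1 (typF_input_invariant _ _ _ Ht (Forall_nil _) (Forall_nil _) Hn) HA).
Qed.
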